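(* Let $A, B, C \subseteq\omega$ with $B$ and $C$ infinite. If $A$ is c.e. relative to every infinite subset of $B$, and $B$ is c.e. relative to every infinite subset of $C$, then $A$ is c.e. relative to every infinite subset of $C$. *)

From Stdlib Require Import List Arith.
Import ListNotations.

(* Arities are not tracked: functions act on argument lists, missing
   arguments default to 0 (this only pads/projects, so the class of
   functions defined is exactly the X-partial recursive functions). *)
Inductive prf : Type :=
| PZero : prf
| PSucc : prf
| PProj : nat -> prf
| POracle : prf
| PComp : prf -> list prf -> prf
| PRec : prf -> prf -> prf
| PMu : prf -> prf.

Definition hd0 (l : list nat) : nat := hd 0 l.

Inductive peval (X : nat -> Prop) : prf -> list nat -> nat -> Prop :=
| ev_zero : forall a, peval X PZero a 0
| ev_succ : forall a, peval X PSucc a (S (hd0 a))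
| ev_proj : forall i a, peval X (PProj i) a (nth i a 0)
| ev_orac_in : forall a, X (hd0 a) -> peval X POracle a 1
| ev_orac_out : forall a, ~ X (hd0 a) -> peval X POracle a 0
| ev_comp : forall f gs a bs y,
    pevall X gs a bs -> peval X f bs y -> peval X (PComp f gs) a y
| ev_rec0 : forall f g a y,
    hd0 a = 0 -> peval X f (tl a) y -> peval X (PRec f g) a y
| ev_recS : forall f g a n r y,
    hd0 a = S n -> peval X (PRec f g) (n :: tl a) r ->
    peval X g (n :: r :: tl a) y -> peval X (PRec f g) a y
| ev_mu : forall f a y,
    peval X f (y :: a) 0 ->
    (forall z, z < y -> exists v, v <> 0 /\ peval X f (z :: a) v) ->
    peval X (PMu f) a y
with pevall (X : nat -> Prop) : list prf -> list nat -> list nat -> Prop :=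
| evl_nil : forall a, pevall X [] a []
| evl_cons : forall g gs a b bs,
    peval X g a b -> pevall X gs a bs -> pevall X (g :: gs) a (b :: bs).

Definition ce_in (X A : nat -> Prop) : Prop :=
  exists e : prf, forall n, A n <-> exists y, peval X e [n] y.

Definition infinite_set (B : nat -> Prop) : Prop :=
  forall m, exists n, m <= n /\ B n.

Definition subset_of (Y B : nat -> Prop) : Prop := forall n, Y n -> B n.

(* Fix an infinite Y contained in C; then B is the domain of some Y-partial recursive
   function e. Evaluating e on x with every unbounded search cut off at a clock t is a
   total function of (x, t), and it is Y-computable: each term is compiled into one that
   reads the clock from an argument position the term itself never inspects. Hence Y
   computes, for every d, the least x >= d on which e converges within clock t, where t
   is the least clock admitting such an x <= t. This map [next_elt] is idempotent with
   values in B above its argument, so its fixed points form an infinite subset Z of B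
   that is decidable in Y. By hypothesis A is c.e. in Z, and replacing the oracle for Z
   by Y's decision procedure for Z shows that A is c.e. in Y. *)

From Stdlib Require Import List Arith Bool Lia Wf_nat ClassicalEpsilon FunctionalExtensionality.
Import ListNotations.

Definition least (p : nat -> bool) : nat :=
  epsilon (inhabits 0) (fun n => p n = true /\ forall m, p m = true -> n <= m).

Lemma least_spec (p : nat -> bool) n :
  p n = true -> p (least p) = true /\ forall m, p m = true -> least p <= m.
Proof.
  intro Hn. unfold least. apply epsilon_spec.
  assert (Hdec : forall m, p m = true \/ p m <> true) by (intro m; destruct (p m); auto).
  destruct (dec_inh_nat_subset_has_unique_least_element _ Hdec (ex_intro _ n Hn)) as [m [Hm _]].
  exists m. exact Hm.
Qed.

Lemma least_correct p n : p n = true -> p (least p) = true.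
Proof. intro Hn. exact (proj1 (least_spec p n Hn)). Qed.

Lemma least_le p n : p n = true -> least p <= n.
Proof. intro Hn. exact (proj2 (least_spec p n Hn) n Hn). Qed.

Lemma least_minimal p n m : p n = true -> m < least p -> p m = false.
Proof.
  intros Hn Hm. destruct (p m) eqn:E; auto.
  apply least_le in E. lia.
Qed.

Lemma least_unique p n : p n = true -> (forall m, m < n -> p m = false) -> least p = n.
Proof.
  intros Hn Hlt. pose proof (least_le p n Hn) as Hle.
  pose proof (least_correct p n Hn) as Hp.
  destruct (Nat.eq_dec (least p) n) as [|Hne]; auto.
  rewrite Hlt in Hp by lia. discriminate.
Qed.

Definition chi (X : nat -> Prop) (x : nat) : nat :=
  if excluded_middle_informative (X x) then 1 else 0.

Definition computes (X : nat -> Prop) (e : prf) (F : list nat -> nat) : Prop :=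
  forall a y, peval X e a y <-> y = F a.

Section Computes.

Variable X : nat -> Prop.

Lemma computes_ext e F G : computes X e F -> (forall a, F a = G a) -> computes X e G.
Proof. intros HF HFG a y. rewrite (HF a y), HFG. tauto. Qed.

Lemma computes_zero : computes X PZero (fun _ => 0).
Proof. intros a y. split; intro H; [inversion H | subst; constructor]; auto. Qed.

Lemma computes_succ : computes X PSucc (fun a => S (hd0 a)).
Proof. intros a y. split; intro H; [inversion H | subst; constructor]; auto. Qed.

Lemma computes_proj i : computes X (PProj i) (fun a => nth i a 0).
Proof. intros a y. split; intro H; [inversion H | subst; constructor]; auto. Qed.

Lemma computes_oracle : computes X POracle (fun a => chi X (hd0 a)).
Proof.
  intros a y. unfold chi.
  destruct (excluded_middle_informative (X (hd0 a))) as [Hx | Hx];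
    split; intro H; solve [inversion H; subst; tauto | subst; constructor; auto].
Qed.

Lemma computes_list gs Gs :
  Forall2 (computes X) gs Gs ->
  forall a bs, pevall X gs a bs <-> bs = map (fun G => G a) Gs.
Proof.
  induction 1 as [|g G gs Gs Hg _ IH]; intros a bs; split; intro H.
  - inversion H; auto.
  - subst. constructor.
  - inversion H as [|? ? ? b bs' Hb Hbs]; subst.
    apply Hg in Hb. apply IH in Hbs. subst. reflexivity.
  - subst. constructor; [apply Hg | apply IH]; reflexivity.
Qed.

Lemma computes_comp f F gs Gs :
  computes X f F -> Forall2 (computes X) gs Gs ->
  computes X (PComp f gs) (fun a => F (map (fun G => G a) Gs)).
Proof.
  intros Hf Hgs a y. split; intro H.
  - inversion H as [| | | | |? ? ? bs ? Hbs Hy| | |]; subst.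
    apply (computes_list gs Gs Hgs) in Hbs. subst. apply Hf, Hy.
  - subst. econstructor.
    + apply (computes_list gs Gs Hgs). reflexivity.
    + apply Hf. reflexivity.
Qed.

Lemma computes_rec f F g G :
  computes X f F -> computes X g G ->
  computes X (PRec f g)
    (fun a => nat_rec (fun _ => nat) (F (tl a)) (fun m r => G (m :: r :: tl a)) (hd0 a)).
Proof.
  intros Hf Hg a. remember (hd0 a) as n eqn:Hn. revert a Hn.
  induction n as [|n IH]; intros a Hn y; split; intro H; cbn [nat_rec].
  - inversion H; subst; [apply Hf; assumption | congruence].
  - subst. apply ev_rec0; [auto | apply Hf; reflexivity].
  - inversion H as [| | | | | |? ? ? ? E0 _|? ? ? n' r ? E0 Hr Hy|]; subst; [congruence|].
    rewrite <- Hn in E0. injection E0 as <-.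
    apply (IH (n :: tl a) eq_refl) in Hr. subst. apply Hg, Hy.
  - subst. eapply ev_recS; [symmetry; exact Hn | apply (IH (n :: tl a) eq_refl); reflexivity |].
    apply Hg. reflexivity.
Qed.

Lemma computes_mu f F :
  computes X f F -> (forall a, exists y, F (y :: a) = 0) ->
  computes X (PMu f) (fun a => least (fun y => F (y :: a) =? 0)).
Proof.
  intros Hf Hex a y. destruct (Hex a) as [y0 Hy0].
  assert (Hw : (F (y0 :: a) =? 0) = true) by (rewrite Hy0; reflexivity).
  split; intro H.
  - inversion H as [| | | | | | | |? ? ? Hy Hlt]; subst. symmetry. apply least_unique.
    + apply Hf in Hy. rewrite <- Hy. reflexivity.
    + intros z Hz. destruct (Hlt z Hz) as [v [Hv Hzv]]. apply Hf in Hzv. subst.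
      apply Nat.eqb_neq. auto.
  - subst. constructor.
    + apply Hf. symmetry. apply Nat.eqb_eq. exact (least_correct (fun y => F (y :: a) =? 0) _ Hw).
    + intros z Hz. exists (F (z :: a)). split.
      * apply Nat.eqb_neq. exact (least_minimal (fun y => F (y :: a) =? 0) _ _ Hw Hz).
      * apply Hf. reflexivity.
Qed.

End Computes.

Definition one : prf := PComp PSucc [PZero].
Definition succ_of (e : prf) : prf := PComp PSucc [e].
Definition pred_of (e : prf) : prf := PComp (PRec PZero (PProj 0)) [e].
Definition minus_of (e1 e2 : prf) : prf := PComp (PRec (PProj 0) (pred_of (PProj 1))) [e2; e1].
Definition ifz (c t e : prf) : prf := PComp (PRec (PProj 0) (PProj 3)) [c; t; e].

(* A test is a term evaluating to [0] (true) or [1] (false): [PMu] searches for [0]. *)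
Definition computes_test (X : nat -> Prop) (e : prf) (p : list nat -> bool) : Prop :=
  computes X e (fun a => if p a then 0 else 1).

Definition le_test (e1 e2 : prf) : prf := ifz (minus_of e1 e2) PZero one.
Definition or_test (e1 e2 : prf) : prf := ifz e1 PZero e2.
Definition and_test (e1 e2 : prf) : prf := ifz e1 e2 one.
Definition eq_test (e1 e2 : prf) : prf := and_test (le_test e1 e2) (le_test e2 e1).
Definition nonzero_test (e : prf) : prf := ifz e one PZero.

Ltac compose :=
  eapply computes_ext;
  [ eapply computes_comp; [ | repeat (apply Forall2_cons || apply Forall2_nil) ] | ].

Section Combinators.

Variable X : nat -> Prop.

Lemma computes_one : computes X one (fun _ => 1).
Proof. compose; [apply computes_succ | apply computes_zero | reflexivity]. Qed.

Lemma computes_succ_of e E : computes X e E -> computes X (succ_of e) (fun a => S (E a)).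
Proof. intro He. compose; [apply computes_succ | exact He | reflexivity]. Qed.

Lemma computes_pred_of e E : computes X e E -> computes X (pred_of e) (fun a => pred (E a)).
Proof.
  intro He. compose; [apply computes_rec; [apply computes_zero | apply computes_proj] | exact He |].
  intro a. cbn. destruct (E a); reflexivity.
Qed.

Lemma computes_minus_of e1 E1 e2 E2 :
  computes X e1 E1 -> computes X e2 E2 -> computes X (minus_of e1 e2) (fun a => E1 a - E2 a).
Proof.
  intros H1 H2.
  compose; [apply computes_rec; [apply computes_proj | apply computes_pred_of, computes_proj]
           | exact H2 | exact H1 |].
  intro a. cbn. induction (E2 a) as [|n IH]; cbn; [lia | rewrite IH; lia].
Qed.

Lemma computes_ifz c C t T e E :
  computes X c C -> computes X t T -> computes X e E ->
  computes X (ifz c t e) (fun a => if C a =? 0 then T a else E a).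
Proof.
  intros Hc Ht He.
  compose; [apply computes_rec; apply computes_proj | exact Hc | exact Ht | exact He |].
  intro a. cbn. destruct (C a); reflexivity.
Qed.

Lemma computes_if c p t T e E :
  computes_test X c p -> computes X t T -> computes X e E ->
  computes X (ifz c t e) (fun a => if p a then T a else E a).
Proof.
  intros Hc Ht He. eapply computes_ext; [apply (computes_ifz _ _ _ _ _ _ Hc Ht He) |].
  intro a. cbv beta. destruct (p a); reflexivity.
Qed.

Lemma computes_le_test e1 E1 e2 E2 :
  computes X e1 E1 -> computes X e2 E2 -> computes_test X (le_test e1 e2) (fun a => E1 a <=? E2 a).
Proof.
  intros H1 H2. eapply computes_ext.
  - apply computes_ifz; [| apply computes_zero | apply computes_one].
    apply computes_minus_of; eassumption.
  - intro a. cbv beta. destruct (Nat.leb_spec (E1 a) (E2 a)), (Nat.eqb_spec (E1 a - E2 a) 0); lia.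
Qed.

Lemma computes_or_test e1 p1 e2 p2 :
  computes_test X e1 p1 -> computes_test X e2 p2 ->
  computes_test X (or_test e1 e2) (fun a => p1 a || p2 a).
Proof.
  intros H1 H2.
  eapply computes_ext; [apply computes_if; [exact H1 | apply computes_zero | exact H2] |].
  intro a. cbv beta. destruct (p1 a); reflexivity.
Qed.

Lemma computes_and_test e1 p1 e2 p2 :
  computes_test X e1 p1 -> computes_test X e2 p2 ->
  computes_test X (and_test e1 e2) (fun a => p1 a && p2 a).
Proof.
  intros H1 H2.
  eapply computes_ext; [apply computes_if; [exact H1 | exact H2 | apply computes_one] |].
  intro a. cbv beta. destruct (p1 a); reflexivity.
Qed.

Lemma computes_eq_test e1 E1 e2 E2 :
  computes X e1 E1 -> computes X e2 E2 -> computes_test X (eq_test e1 e2) (fun a => E1 a =? E2 a).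
Proof.
  intros H1 H2.
  eapply computes_ext; [apply computes_and_test; apply computes_le_test; eassumption |].
  intro a. cbv beta.
  destruct (Nat.leb_spec (E1 a) (E2 a)), (Nat.leb_spec (E2 a) (E1 a)), (Nat.eqb_spec (E1 a) (E2 a));
    cbn; lia.
Qed.

Lemma computes_nonzero_test e E :
  computes X e E -> computes_test X (nonzero_test e) (fun a => negb (E a =? 0)).
Proof.
  intro He. eapply computes_ext.
  - apply computes_ifz; [exact He | apply computes_one | apply computes_zero].
  - intro a. cbv beta. destruct (E a); reflexivity.
Qed.

Lemma computes_least e p :
  computes_test X e p -> (forall a, exists y, p (y :: a) = true) ->
  computes X (PMu e) (fun a => least (fun y => p (y :: a))).
Proof.
  intros He Hex. eapply computes_ext; [apply (computes_mu _ _ _ He) |].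
  - intro a. destruct (Hex a) as [y Hy]. exists y. rewrite Hy. reflexivity.
  - intro a. cbv beta. f_equal. apply functional_extensionality. intro y. cbv beta.
    destruct (p (y :: a)); reflexivity.
Qed.

End Combinators.

Fixpoint prf_ind_nested (P : prf -> Prop)
  (hz : P PZero) (hs : P PSucc) (hp : forall i, P (PProj i)) (ho : P POracle)
  (hc : forall f gs, P f -> Forall P gs -> P (PComp f gs))
  (hr : forall f g, P f -> P g -> P (PRec f g))
  (hm : forall f, P f -> P (PMu f)) (e : prf) {struct e} : P e :=
  let IH := prf_ind_nested P hz hs hp ho hc hr hm in
  match e with
  | PZero => hz
  | PSucc => hs
  | PProj i => hp i
  | POracle => ho
  | PComp f gs =>
      hc f gs (IH f)
        ((fix all (l : list prf) : Forall P l :=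
            match l with
            | [] => Forall_nil _
            | g :: l' => Forall_cons _ (IH g) (all l')
            end) gs)
  | PRec f g => hr f g (IH f) (IH g)
  | PMu f => hm f (IH f)
  end.

(* [eval_within X s e a] is [S y] if [e] halts on [a] with value [y] when every
   unbounded search is cut off at [s], and [0] otherwise. *)
Fixpoint eval_within (X : nat -> Prop) (s : nat) (e : prf) (a : list nat) : nat :=
  match e with
  | PZero => 1
  | PSucc => S (S (hd0 a))
  | PProj i => S (nth i a 0)
  | POracle => S (chi X (hd0 a))
  | PComp f gs =>
      let vs := map (fun g => eval_within X s g a) gs in
      if forallb (fun v => negb (v =? 0)) vs then eval_within X s f (map pred vs) else 0
  | PRec f g =>
      nat_rec (fun _ => nat) (eval_within X s f (tl a))
        (fun m r => match r with 0 => 0 | S r' => eval_within X s g (m :: r' :: tl a) end)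
        (hd0 a)
  | PMu f =>
      let y := least (fun y => (y =? s) || (eval_within X s f (y :: a) <=? 1)) in
      if s <=? y then 0 else if eval_within X s f (y :: a) =? 1 then S y else 0
  end.

Definition eventually (P : nat -> Prop) : Prop := exists s0, forall s, s0 <= s -> P s.

Lemma eventually_and P Q : eventually P -> eventually Q -> eventually (fun s => P s /\ Q s).
Proof.
  intros [s1 HP] [s2 HQ]. exists (Nat.max s1 s2). intros s Hs. split; [apply HP | apply HQ]; lia.
Qed.

Lemma eventually_forall_lt (P : nat -> nat -> Prop) y :
  (forall z, z < y -> eventually (P z)) -> eventually (fun s => forall z, z < y -> P z s).
Proof.
  induction y as [|y IH]; intro H.
  - exists 0. intros s _ z Hz. lia.
  - destruct (eventually_and _ _ (IH (fun z Hz => H z (Nat.lt_lt_succ_r _ _ Hz)))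
                (H y (Nat.lt_succ_diag_r y))) as [s0 Hs0].
    exists s0. intros s Hs z Hz. destruct (Hs0 s Hs) as [Hlt Hy].
    destruct (Nat.eq_dec z y) as [->|]; [exact Hy | apply Hlt; lia].
Qed.

Section ClockedEvaluation.

Variable X : nat -> Prop.

Let sound_for (e : prf) : Prop :=
  forall s a y, eval_within X s e a = S y -> peval X e a y.

Let complete_for (e : prf) : Prop :=
  forall a y, peval X e a y -> eventually (fun s => eval_within X s e a = S y).

Lemma eval_within_sound_rec f g : sound_for f -> sound_for g -> sound_for (PRec f g).
Proof.
  intros IHf IHg s a y. cbn [eval_within]. revert a y.
  enough (Hrec : forall n a y, hd0 a = n ->
    nat_rec (fun _ => nat) (eval_within X s f (tl a))
      (fun m r => match r with 0 => 0 | S r' => eval_within X s g (m :: r' :: tl a) end) n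
      = S y -> peval X (PRec f g) a y).
  { intros a y Hy. exact (Hrec _ a y eq_refl Hy). }
  induction n as [|n IH]; intros a y Hn Hy; cbn in Hy.
  - apply ev_rec0; [assumption | exact (IHf _ _ _ Hy)].
  - destruct (nat_rec _ _ _ n) as [|r] eqn:Hr; [discriminate|].
    eapply ev_recS; [exact Hn | | exact (IHg _ _ _ Hy)].
    apply (IH (n :: tl a)); [reflexivity | exact Hr].
Qed.

Lemma eval_within_sound_mu f : sound_for f -> sound_for (PMu f).
Proof.
  intros IHf s a y Hy. cbn [eval_within] in Hy.
  set (p := fun y => (y =? s) || (eval_within X s f (y :: a) <=? 1)) in Hy.
  assert (Hs : p s = true) by (unfold p; rewrite Nat.eqb_refl; reflexivity).
  destruct (s <=? least p) eqn:Hlt; [discriminate|].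
  destruct (eval_within X s f (least p :: a) =? 1) eqn:Hval; [|discriminate].
  injection Hy as <-. constructor.
  - apply (IHf s). apply Nat.eqb_eq. exact Hval.
  - intros z Hz. pose proof (least_minimal p s z Hs Hz) as Hpz.
    unfold p in Hpz. apply orb_false_iff in Hpz as [_ Hpz]. apply Nat.leb_gt in Hpz.
    destruct (eval_within X s f (z :: a)) as [|v] eqn:Hv; [lia|].
    exists v. split; [lia | exact (IHf _ _ _ Hv)].
Qed.

Lemma eval_within_sound e s a y : eval_within X s e a = S y -> peval X e a y.
Proof.
  revert s a y.
  induction e as [| | i | | f gs IHf IHgs | f g IHf IHg | f IHf] using prf_ind_nested.
  1-4: intros s a y Hy; cbn [eval_within] in Hy; injection Hy as <-; try constructor.
  - unfold chi. destruct (excluded_middle_informative (X (hd0 a))); constructor; assumption.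
  - intros s a y Hy. cbn [eval_within] in Hy.
    destruct (forallb _ _) eqn:Hall; [|discriminate].
    econstructor; [| exact (IHf _ _ _ Hy)]. clear Hy.
    induction IHgs as [|g gs' IHg _ IH]; cbn in Hall |- *; constructor.
    + apply andb_true_iff in Hall as [Hg _]. apply (IHg s).
      destruct (eval_within X s g a); [discriminate | reflexivity].
    + apply andb_true_iff in Hall as [_ Hgs']. exact (IH Hgs').
  - apply eval_within_sound_rec; assumption.
  - apply eval_within_sound_mu; assumption.
Qed.

Lemma eval_within_complete_args gs a bs :
  Forall complete_for gs -> pevall X gs a bs ->
  eventually (fun s => map (fun g => eval_within X s g a) gs = map S bs).
Proof.
  intro IHgs. revert bs.
  induction IHgs as [|g gs IHg _ IH]; intros bs Hbs; inversion Hbs as [|? ? ? b bs' Hb Hbs']; subst.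
  - exists 0. reflexivity.
  - destruct (eventually_and _ _ (IHg _ _ Hb) (IH _ Hbs')) as [s0 Hs0].
    exists s0. intros s Hs. cbn. destruct (Hs0 s Hs) as [-> ->]. reflexivity.
Qed.

Lemma eval_within_complete_rec f g : complete_for f -> complete_for g -> complete_for (PRec f g).
Proof.
  intros IHf IHg a y Hy. cbn [eval_within]. revert a y Hy.
  enough (Hrec : forall n a y, hd0 a = n -> peval X (PRec f g) a y ->
    eventually (fun s => nat_rec (fun _ => nat) (eval_within X s f (tl a))
      (fun m r => match r with 0 => 0 | S r' => eval_within X s g (m :: r' :: tl a) end) n
      = S y)).
  { intros a y Hy. exact (Hrec _ a y eq_refl Hy). }
  induction n as [|n IH]; intros a y Hn Hy.
  - inversion Hy as [| | | | | |? ? ? ? _ Hf|? ? ? ? ? ? E0 _ _|]; subst; [|congruence].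
    exact (IHf _ _ Hf).
  - inversion Hy as [| | | | | |? ? ? ? E0 _|? ? ? n' r ? E0 Hr Hg|]; subst; [congruence|].
    rewrite E0 in Hn. injection Hn as <-.
    destruct (eventually_and _ _ (IH (n' :: tl a) _ eq_refl Hr) (IHg _ _ Hg)) as [s0 Hs0].
    exists s0. intros s Hs. destruct (Hs0 s Hs) as [Hprev Hstep]. cbn. cbn in Hprev.
    rewrite Hprev. exact Hstep.
Qed.

Lemma eval_within_complete_mu f : complete_for f -> complete_for (PMu f).
Proof.
  intros IHf a y Hy. inversion Hy as [| | | | | | | |? ? ? Hf Hlt]; subst.
  assert (Hbelow : eventually (fun s => forall z, z < y -> 2 <= eval_within X s f (z :: a))).
  { apply eventually_forall_lt. intros z Hz.
    destruct (Hlt z Hz) as [v [Hv Hzv]]. destruct (IHf _ _ Hzv) as [s0 Hs0].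
    exists s0. intros s Hs. rewrite Hs0 by assumption. lia. }
  destruct (eventually_and _ _ (IHf _ _ Hf) Hbelow) as [s0 Hs0].
  exists (Nat.max (S y) s0). intros s Hs. destruct (Hs0 s ltac:(lia)) as [Hzero Hpos].
  cbn [eval_within].
  assert (Hleast : least (fun z => (z =? s) || (eval_within X s f (z :: a) <=? 1)) = y).
  { apply least_unique.
    - rewrite Hzero. apply orb_true_r.
    - intros z Hz. specialize (Hpos z Hz). apply orb_false_iff. split.
      + apply Nat.eqb_neq. lia.
      + apply Nat.leb_gt. lia. }
  rewrite Hleast, Hzero. destruct (Nat.leb_spec s y); [lia | reflexivity].
Qed.

Lemma eval_within_complete e a y :
  peval X e a y -> eventually (fun s => eval_within X s e a = S y).
Proof.
  revert a y.
  induction e as [| | i | | f gs IHf IHgs | f g IHf IHg | f IHf] using prf_ind_nested.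
  1-3: intros a y Hy; inversion Hy; subst; exists 0; reflexivity.
  - intros a y Hy. exists 0. intros s _. cbn. unfold chi.
    inversion Hy; subst; destruct (excluded_middle_informative (X (hd0 a))); tauto.
  - intros a y Hy. inversion Hy as [| | | | |? ? ? bs ? Hbs Hf| | |]; subst.
    destruct (eventually_and _ _ (eval_within_complete_args gs a bs IHgs Hbs) (IHf _ _ Hf))
      as [s0 Hs0].
    exists s0. intros s Hs. destruct (Hs0 s Hs) as [Hmap Hfs]. cbn [eval_within].
    rewrite Hmap, map_map, map_id.
    replace (forallb _ (map S bs)) with true; [exact Hfs |].
    clear. induction bs as [|b bs IH]; [reflexivity | exact IH].
  - apply eval_within_complete_rec; assumption.
  - apply eval_within_complete_mu; assumption.
Qed.

End ClockedEvaluation.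

Fixpoint width (e : prf) : nat :=
  match e with
  | PZero => 0
  | PSucc | POracle => 1
  | PProj i => S i
  | PComp _ gs => list_max (map width gs)
  | PRec f g => Nat.max (S (width f)) (pred (width g))
  | PMu f => pred (width f)
  end.

Definition agree_upto (k : nat) (a b : list nat) : Prop :=
  forall i, i < k -> nth i a 0 = nth i b 0.

Lemma hd0_nth (a : list nat) : hd0 a = nth 0 a 0.
Proof. destruct a; reflexivity. Qed.

Lemma nth_tl (l : list nat) i : nth i (tl l) 0 = nth (S i) l 0.
Proof. destruct l; [destruct i |]; reflexivity. Qed.

Lemma nth_map_nth_seq (l : list nat) m n i :
  i < n -> nth i (map (fun j => nth j l 0) (seq m n)) 0 = nth (m + i) l 0.
Proof.
  intro Hi. rewrite <- (seq_nth m 0 Hi). symmetry.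
  apply nth_nth_nth_map. rewrite length_seq. left. exact Hi.
Qed.

Lemma eval_within_agree X e s k a b :
  width e <= k -> agree_upto k a b -> eval_within X s e a = eval_within X s e b.
Proof.
  revert k a b.
  induction e as [| | i | | f gs IHf IHgs | f g IHf IHg | f IHf] using prf_ind_nested;
    intros k a b Hw Hab; cbn [eval_within width] in *.
  - reflexivity.
  - rewrite !hd0_nth, (Hab 0); [reflexivity | lia].
  - rewrite (Hab i); [reflexivity | lia].
  - rewrite !hd0_nth, (Hab 0); [reflexivity | lia].
  - apply list_max_le, Forall_map in Hw.
    assert (Hargs : forall g, In g gs -> eval_within X s g a = eval_within X s g b).
    { intros g Hg. rewrite Forall_forall in IHgs, Hw. exact (IHgs g Hg k a b (Hw g Hg) Hab). }
    rewrite (map_ext_in _ _ gs Hargs). reflexivity.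
  - assert (Htl : agree_upto (pred k) (tl a) (tl b)).
    { intros i Hi. rewrite !nth_tl. apply Hab. lia. }
    rewrite !hd0_nth, (Hab 0) by lia.
    induction (nth 0 b 0) as [|n IH]; cbn.
    + apply (IHf (pred k)); [lia | exact Htl].
    + rewrite IH. set (r := nat_rec _ (eval_within X s f (tl b)) _ n).
      destruct r as [|r]; [reflexivity|].
      apply (IHg (S k)); [lia |].
      intros [|[|i]] Hi; cbn; [reflexivity | reflexivity | apply Htl; lia].
  - assert (Hstep : forall y, eval_within X s f (y :: a) = eval_within X s f (y :: b)).
    { intro y. apply (IHf (S k)); [lia |]. intros [|i] Hi; cbn; [reflexivity | apply Hab; lia]. }
    replace (fun y => (y =? s) || (eval_within X s f (y :: a) <=? 1))
      with (fun y => (y =? s) || (eval_within X s f (y :: b) <=? 1))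
      by (apply functional_extensionality; intro y; rewrite Hstep; reflexivity).
    rewrite Hstep. reflexivity.
Qed.

(* [clocked k e] reads the clock [s] of [eval_within] from its [k]-th argument; this is
   sound as long as [e] itself reads only the arguments below [k]. *)
Fixpoint clocked (k : nat) (e : prf) : prf :=
  match e with
  | PZero => one
  | PSucc => succ_of (succ_of (PProj 0))
  | PProj i => succ_of (PProj i)
  | POracle => succ_of POracle
  | PComp f gs =>
      let kf := Nat.max (length gs) (width f) in
      fold_right (fun g rest => ifz (clocked k g) PZero rest)
        (PComp (clocked kf f)
           (map (fun g => pred_of (clocked k g)) gs ++ repeat PZero (kf - length gs) ++ [PProj k]))
        gs
  | PRec f g =>
      PRec (clocked (pred k) f)
        (ifz (PProj 1) PZero
           (PComp (clocked (S k) g) (PProj 0 :: pred_of (PProj 1) :: map PProj (seq 2 k))))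
  | PMu f =>
      let y := PMu (or_test (eq_test (PProj 0) (PProj (S k))) (le_test (clocked (S k) f) one)) in
      ifz (le_test (PProj k) y) PZero
        (ifz (eq_test (PComp (clocked (S k) f) (y :: map PProj (seq 0 (S k)))) one)
           (succ_of y) PZero)
  end.

Definition clocked_spec (X : nat -> Prop) (k : nat) (e : prf) : Prop :=
  computes X (clocked k e) (fun l => eval_within X (nth k l 0) e l).

Section Compilation.

Variable X : nat -> Prop.

Lemma computes_projs m n :
  Forall2 (computes X) (map PProj (seq m n)) (map (fun i l => nth i l 0) (seq m n)).
Proof.
  revert m. induction n as [|n IH]; intro m; constructor; [apply computes_proj | apply IH].
Qed.

Lemma computes_zeros n : Forall2 (computes X) (repeat PZero n) (repeat (fun _ => 0) n).
Proof. induction n as [|n IH]; constructor; [apply computes_zero | apply IH]. Qed.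

Lemma computes_preds k gs :
  Forall (clocked_spec X k) gs ->
  Forall2 (computes X) (map (fun g => pred_of (clocked k g)) gs)
    (map (fun g l => pred (eval_within X (nth k l 0) g l)) gs).
Proof.
  induction 1 as [|g gs Hg _ IH]; constructor; [apply computes_pred_of, Hg | exact IH].
Qed.

Lemma computes_guard k gs body F :
  Forall (clocked_spec X k) gs -> computes X body F ->
  computes X (fold_right (fun g rest => ifz (clocked k g) PZero rest) body gs)
    (fun l => if forallb (fun v => negb (v =? 0)) (map (fun g => eval_within X (nth k l 0) g l) gs)
              then F l else 0).
Proof.
  intros Hgs Hbody. induction Hgs as [|g gs Hg _ IH]; cbn [fold_right].
  - eapply computes_ext; [exact Hbody | reflexivity].
  - eapply computes_ext; [apply computes_ifz; [exact Hg | apply computes_zero | exact IH] |].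
    intro l. cbn. destruct (eval_within X (nth k l 0) g l); reflexivity.
Qed.

Lemma pad_with_clock (vs : list nat) n kf s :
  length vs = n -> n <= kf ->
  nth kf (vs ++ repeat 0 (kf - n) ++ [s]) 0 = s /\
  agree_upto kf (vs ++ repeat 0 (kf - n) ++ [s]) vs.
Proof.
  intros <- Hlen. split.
  - rewrite app_nth2 by lia. rewrite app_nth2; rewrite repeat_length; [|lia].
    replace (kf - length vs - (kf - length vs)) with 0 by lia. reflexivity.
  - intros i Hi. destruct (Nat.lt_ge_cases i (length vs)).
    + apply app_nth1. assumption.
    + rewrite app_nth2, app_nth1 by (rewrite ?repeat_length; lia).
      rewrite nth_repeat. symmetry. apply nth_overflow. assumption.
Qed.

Lemma clocked_comp f gs k :
  clocked_spec X (Nat.max (length gs) (width f)) f -> Forall (clocked_spec X k) gs ->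
  clocked_spec X k (PComp f gs).
Proof.
  intros Hf Hgs. set (kf := Nat.max (length gs) (width f)) in Hf.
  unfold clocked_spec. cbn [clocked]. fold kf.
  eapply computes_ext; [apply computes_guard; [exact Hgs |] |].
  - apply computes_comp; [exact Hf |]. repeat apply Forall2_app.
    + apply computes_preds, Hgs.
    + apply computes_zeros.
    + apply Forall2_cons; [apply computes_proj | apply Forall2_nil].
  - intro l. cbn [eval_within]. set (vs := map (fun g => eval_within X (nth k l 0) g l) gs).
    destruct (forallb _ vs); [|reflexivity].
    rewrite !map_app, map_repeat, !map_map. cbn [map].
    replace (map (fun g => pred (eval_within X (nth k l 0) g l)) gs) with (map pred vs)
      by (unfold vs; rewrite map_map; reflexivity).
    destruct (pad_with_clock (map pred vs) (length gs) kf (nth k l 0)) as [Hclock Hagree].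
    + unfold vs. rewrite !length_map. reflexivity.
    + unfold kf. lia.
    + rewrite Hclock. apply (eval_within_agree X f _ kf); [unfold kf; lia | exact Hagree].
Qed.

Lemma clocked_rec f g k :
  0 < k -> width g <= S k -> clocked_spec X (pred k) f -> clocked_spec X (S k) g ->
  clocked_spec X k (PRec f g).
Proof.
  intros Hk Hwg Hf Hg. unfold clocked_spec. cbn [clocked].
  eapply computes_ext.
  - apply computes_rec; [exact Hf |].
    apply computes_ifz; [apply computes_proj | apply computes_zero |].
    apply computes_comp; [exact Hg |].
    apply Forall2_cons; [apply computes_proj |].
    apply Forall2_cons; [apply computes_pred_of, computes_proj | apply computes_projs].
  - intro l. cbn [eval_within]. rewrite nth_tl, (Nat.succ_pred_pos k Hk).
    f_equal. apply functional_extensionality. intro m.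
    apply functional_extensionality. intros [|r]; [reflexivity |]. cbn -[eval_within].
    destruct k as [|k]; [lia |]. rewrite map_map, nth_map_nth_seq by lia. cbn. rewrite nth_tl.
    apply (eval_within_agree X g _ (S (S k))); [exact Hwg |].
    intros [|[|i]] Hi; [reflexivity | reflexivity |].
    transitivity (nth i (map (fun x => nth x (m :: S r :: tl l) 0) (seq 2 (S k))) 0);
      [reflexivity |].
    rewrite nth_map_nth_seq by lia. reflexivity.
Qed.

Lemma clocked_mu f k :
  width f <= S k -> clocked_spec X (S k) f -> clocked_spec X k (PMu f).
Proof.
  intros Hwf Hf. unfold clocked_spec. cbn [clocked].
  set (search := fun l y => (y =? nth k l 0) || (eval_within X (nth k l 0) f (y :: l) <=? 1)).
  assert (Hsearch : computes X
    (PMu (or_test (eq_test (PProj 0) (PProj (S k))) (le_test (clocked (S k) f) one)))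
    (fun l => least (search l))).
  { eapply computes_ext.
    - apply computes_least.
      + apply computes_or_test; [apply computes_eq_test; apply computes_proj |].
        apply computes_le_test; [exact Hf | apply computes_one].
      + intro l. exists (nth k l 0). cbn. rewrite Nat.eqb_refl. reflexivity.
    - reflexivity. }
  eapply computes_ext.
  - apply computes_if; [| apply computes_zero |].
    { apply computes_le_test; [apply computes_proj | exact Hsearch]. }
    apply computes_if; [| apply computes_succ_of, Hsearch | apply computes_zero].
    apply computes_eq_test; [| apply computes_one].
    apply computes_comp; [exact Hf |]. apply Forall2_cons; [exact Hsearch | apply computes_projs].
  - intro l. cbn [eval_within map]. fold (search l). rewrite map_map.
    set (y := least (search l)).
    replace (nth (S k) _ 0) with (nth k l 0)
      by (symmetry; apply (nth_map_nth_seq l 0 (S k) k); lia).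
    rewrite (eval_within_agree X f _ (S k) _ (y :: l) Hwf); [reflexivity |].
    intros [|i] Hi; [reflexivity |]. apply (nth_map_nth_seq l 0 (S k) i). lia.
Qed.

Lemma clocked_correct e k : width e <= k -> clocked_spec X k e.
Proof.
  revert k.
  induction e as [| | i | | f gs IHf IHgs | f g IHf IHg | f IHf] using prf_ind_nested;
    intros k Hw; cbn [width] in Hw.
  - apply computes_one.
  - eapply computes_ext; [apply computes_succ_of, computes_succ_of, computes_proj |].
    intro l. cbn. rewrite hd0_nth. reflexivity.
  - apply computes_succ_of, computes_proj.
  - apply computes_succ_of, computes_oracle.
  - apply list_max_le, Forall_map in Hw.
    apply clocked_comp; [apply IHf; lia |].
    rewrite Forall_forall in IHgs, Hw |- *. intros g Hg. exact (IHgs g Hg k (Hw g Hg)).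
  - apply clocked_rec; [lia | lia | apply IHf; lia | apply IHg; lia].
  - apply clocked_mu; [lia | apply IHf; lia].
Qed.

End Compilation.

Fixpoint relativize (d : prf) (e : prf) : prf :=
  match e with
  | POracle => d
  | PComp f gs => PComp (relativize d f) (map (relativize d) gs)
  | PRec f g => PRec (relativize d f) (relativize d g)
  | PMu f => PMu (relativize d f)
  | _ => e
  end.

Lemma peval_relativize Y Z d :
  computes Y d (fun a => chi Z (hd0 a)) ->
  forall e a y, peval Z e a y <-> peval Y (relativize d e) a y.
Proof.
  intro Hd.
  induction e as [| | i | | f gs IHf IHgs | f g IHf IHg | f IHf] using prf_ind_nested;
    intros a y; cbn [relativize].
  - rewrite (computes_zero Z a y), (computes_zero Y a y). reflexivity.
  - rewrite (computes_succ Z a y), (computes_succ Y a y). reflexivity.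
  - rewrite (computes_proj Z i a y), (computes_proj Y i a y). reflexivity.
  - rewrite (computes_oracle Z a y), (Hd a y). reflexivity.
  - assert (Hargs : forall bs, pevall Z gs a bs <-> pevall Y (map (relativize d) gs) a bs).
    { induction IHgs as [|g gs' IHg _ IH]; intro bs; cbn; split; intro Hl;
        inversion Hl as [|? ? ? b bs' Hb Hbs]; subst; constructor;
        solve [apply IHg; assumption | apply IH; assumption]. }
    split; intro H; inversion H as [| | | | |? ? ? bs ? Hbs Hf| | |]; subst;
      econstructor; solve [apply Hargs; eassumption | apply IHf; eassumption].
  - revert a y. enough (Hrec : forall n a y, hd0 a = n ->
      (peval Z (PRec f g) a y <-> peval Y (PRec (relativize d f) (relativize d g)) a y)).
    { intros a y. exact (Hrec _ a y eq_refl). }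
    induction n as [|n IH]; intros a y Hn; split; intro H;
      inversion H as [| | | | | |? ? ? ? E0 Hf|? ? ? n' r ? E0 Hr Hg|]; subst; try congruence.
    + apply ev_rec0; [assumption | apply IHf, Hf].
    + apply ev_rec0; [assumption | apply IHf, Hf].
    + rewrite E0 in Hn. injection Hn as <-.
      eapply ev_recS; [exact E0 | apply (IH (n' :: tl a) r eq_refl), Hr | apply IHg, Hg].
    + rewrite E0 in Hn. injection Hn as <-.
      eapply ev_recS; [exact E0 | apply (IH (n' :: tl a) r eq_refl), Hr | apply IHg, Hg].
  - split; intro H; inversion H as [| | | | | | | |? ? ? Hf Hlt]; subst; constructor;
      try (apply IHf; exact Hf);
      intros z Hz; destruct (Hlt z Hz) as [v [Hv Hzv]]; exists v; split;
      solve [assumption | apply IHf; assumption].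
Qed.

Definition decidable_in (Y Z : nat -> Prop) : Prop :=
  exists d, computes Y d (fun a => chi Z (hd0 a)).

Lemma ce_in_of_decidable_in Y Z A : decidable_in Y Z -> ce_in Z A -> ce_in Y A.
Proof.
  intros [d Hd] [e He]. exists (relativize d e). intro n.
  rewrite He. split; intros [y Hy]; exists y; apply (peval_relativize Y Z d Hd); exact Hy.
Qed.

Section DecidableSubset.

Variables (Y B : nat -> Prop) (eB : prf).
Hypothesis B_infinite : infinite_set B.
Hypothesis eB_enumerates : forall n, B n <-> exists y, peval Y eB [n] y.

Definition halts_by (x t : nat) : bool := negb (eval_within Y t eB [x] =? 0).

Definition first_halted (d t : nat) : nat :=
  least (fun x => (t <? x) || ((d <=? x) && halts_by x t)).

Definition stage (d : nat) : nat := least (fun t => first_halted d t <=? t).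

Definition next_elt (d : nat) : nat := first_halted d (stage d).

Lemma first_halted_le d t x : d <= x <= t -> halts_by x t = true -> first_halted d t <= x.
Proof.
  intros Hx Hhalts. apply least_le.
  rewrite Hhalts, (proj2 (Nat.leb_le d x)) by lia. apply orb_true_r.
Qed.

Lemma first_halted_spec d t :
  first_halted d t <= t -> d <= first_halted d t /\ halts_by (first_halted d t) t = true.
Proof.
  intro Hle.
  assert (Hw : ((t <? S t) || ((d <=? S t) && halts_by (S t) t)) = true)
    by (rewrite (proj2 (Nat.ltb_lt t (S t))) by lia; reflexivity).
  pose proof (least_correct (fun x => (t <? x) || ((d <=? x) && halts_by x t)) _ Hw) as Hfh.
  fold (first_halted d t) in Hfh.
  apply orb_true_iff in Hfh as [Hlt | Hfh]; [apply Nat.ltb_lt in Hlt; lia |].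
  apply andb_true_iff in Hfh as [Hd Hhalts]. apply Nat.leb_le in Hd. tauto.
Qed.

Lemma stage_exists d : exists t, first_halted d t <= t.
Proof.
  destruct (B_infinite d) as [x [Hdx HBx]].
  apply eB_enumerates in HBx as [y Hy].
  destruct (eval_within_complete Y eB [x] y Hy) as [s0 Hs0].
  exists (Nat.max x s0). apply (Nat.le_trans _ x); [| lia].
  apply first_halted_le; [lia |]. unfold halts_by. rewrite Hs0 by lia. reflexivity.
Qed.

Lemma stage_spec d : first_halted d (stage d) <= stage d.
Proof.
  destruct (stage_exists d) as [t Ht]. apply Nat.leb_le.
  apply (least_correct (fun t => first_halted d t <=? t) t), Nat.leb_le, Ht.
Qed.

Lemma next_elt_spec d : d <= next_elt d /\ halts_by (next_elt d) (stage d) = true.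
Proof. apply first_halted_spec, stage_spec. Qed.

Lemma next_elt_in d : B (next_elt d).
Proof.
  pose proof (proj2 (next_elt_spec d)) as Hhalts. unfold halts_by in Hhalts.
  apply eB_enumerates.
  destruct (eval_within Y (stage d) eB [next_elt d]) as [|y] eqn:Hy; [discriminate |].
  exists y. exact (eval_within_sound Y eB _ _ _ Hy).
Qed.

(* With [x := next_elt d >= d], every witness for [stage x] is one for [stage d], and [x]
   witnesses [stage d]; so both stages agree and [x] is the least witness. *)
Lemma next_elt_idem d : next_elt (next_elt d) = next_elt d.
Proof.
  set (x := next_elt d). destruct (next_elt_spec d) as [Hdx Hhalts]. fold x in Hdx, Hhalts.
  assert (Hxt : x <= stage d) by exact (stage_spec d).
  assert (Hstage : stage x = stage d).
  { apply least_unique.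
    - apply Nat.leb_le. apply (Nat.le_trans _ x); [| exact Hxt].
      apply first_halted_le; [lia | exact Hhalts].
    - intros t Ht. apply Nat.leb_gt. destruct (Nat.lt_ge_cases t (first_halted x t)) as [|Hle];
        [assumption | exfalso].
      destruct (first_halted_spec x t Hle) as [Hx' Hhalts'].
      pose proof (first_halted_le d t (first_halted x t) ltac:(lia) Hhalts').
      pose proof (least_minimal (fun t => first_halted d t <=? t) _ t
        (proj2 (Nat.leb_le _ _) (stage_spec d)) Ht) as Hmin.
      apply Nat.leb_gt in Hmin. lia. }
  unfold next_elt at 1. rewrite Hstage.
  apply Nat.le_antisymm; [apply first_halted_le; [lia | exact Hhalts] |].
  apply first_halted_spec. rewrite <- Hstage. apply stage_spec.
Qed.

Definition halts_term : prf :=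
  nonzero_test
    (PComp (clocked (S (width eB)) eB) (PProj 0 :: repeat PZero (width eB) ++ [PProj 1])).

Lemma halts_term_spec : computes_test Y halts_term (fun l => halts_by (nth 0 l 0) (nth 1 l 0)).
Proof.
  eapply computes_ext.
  - apply computes_nonzero_test, computes_comp; [apply clocked_correct; lia |].
    apply Forall2_cons; [apply computes_proj |].
    apply Forall2_app; [apply computes_zeros |].
    apply Forall2_cons; [apply computes_proj | apply Forall2_nil].
  - intro l. cbn [map]. rewrite map_app, map_repeat. cbn [map app].
    destruct (pad_with_clock [nth 0 l 0] 1 (S (width eB)) (nth 1 l 0) eq_refl ltac:(lia))
      as [Hclock Hagree].
    rewrite Nat.sub_succ, Nat.sub_0_r in Hclock, Hagree. cbn [app] in Hclock, Hagree.
    rewrite Hclock, (eval_within_agree Y eB _ (S (width eB)) _ [nth 0 l 0] ltac:(lia) Hagree).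
    reflexivity.
Qed.

Definition first_halted_term : prf :=
  PMu (or_test (le_test (succ_of (PProj 2)) (PProj 0))
         (and_test (le_test (PProj 1) (PProj 0)) (PComp halts_term [PProj 0; PProj 2]))).

Lemma first_halted_term_spec :
  computes Y first_halted_term (fun l => first_halted (nth 0 l 0) (nth 1 l 0)).
Proof.
  assert (Hhalts : computes_test Y (PComp halts_term [PProj 0; PProj 2])
                     (fun l => halts_by (nth 0 l 0) (nth 2 l 0))).
  { eapply computes_ext; [apply computes_comp; [apply halts_term_spec |] |].
    - repeat apply Forall2_cons; [apply computes_proj | apply computes_proj | apply Forall2_nil].
    - reflexivity. }
  eapply computes_ext; [apply computes_least |].
  - apply computes_or_test.
    + apply computes_le_test; [apply computes_succ_of |]; apply computes_proj.
    + apply computes_and_test; [apply computes_le_test; apply computes_proj | exact Hhalts].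
  - intro l. exists (S (nth 1 l 0)). cbn. rewrite Nat.leb_refl. reflexivity.
  - reflexivity.
Qed.

Definition stage_term : prf :=
  PMu (le_test (PComp first_halted_term [PProj 1; PProj 0]) (PProj 0)).

Lemma stage_term_spec : computes Y stage_term (fun l => stage (nth 0 l 0)).
Proof.
  eapply computes_ext; [apply computes_least |].
  - apply computes_le_test; [| apply computes_proj].
    apply computes_comp; [apply first_halted_term_spec |].
    repeat apply Forall2_cons; [apply computes_proj | apply computes_proj | apply Forall2_nil].
  - intro l. destruct (stage_exists (nth 0 l 0)) as [t Ht]. exists t. cbn.
    apply Nat.leb_le, Ht.
  - reflexivity.
Qed.

Definition next_elt_term : prf := PComp first_halted_term [PProj 0; stage_term].

Lemma next_elt_term_spec : computes Y next_elt_term (fun l => next_elt (nth 0 l 0)).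
Proof.
  eapply computes_ext; [apply computes_comp; [apply first_halted_term_spec |] |].
  - repeat apply Forall2_cons; [apply computes_proj | apply stage_term_spec | apply Forall2_nil].
  - reflexivity.
Qed.

Lemma next_elt_fixed_points_decidable : decidable_in Y (fun x => next_elt x = x).
Proof.
  exists (ifz (eq_test next_elt_term (PProj 0)) one PZero). eapply computes_ext.
  - apply computes_if; [| apply computes_one | apply computes_zero].
    apply computes_eq_test; [apply next_elt_term_spec | apply computes_proj].
  - intro l. cbv beta. rewrite hd0_nth. unfold chi.
    destruct (excluded_middle_informative _) as [Hfix | Hfix].
    + rewrite Hfix, Nat.eqb_refl. reflexivity.
    + destruct (Nat.eqb_spec (next_elt (nth 0 l 0)) (nth 0 l 0)); [contradiction | reflexivity].
Qed.

End DecidableSubset.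

Lemma infinite_ce_has_decidable_infinite_subset Y B :
  infinite_set B -> ce_in Y B ->
  exists Z, subset_of Z B /\ infinite_set Z /\ decidable_in Y Z.
Proof.
  intros HB [eB HeB]. exists (fun x => next_elt Y eB x = x). repeat split.
  - intros x Hx. rewrite <- Hx. exact (next_elt_in Y B eB HB HeB x).
  - intro m. exists (next_elt Y eB m).
    split; [apply (next_elt_spec Y B eB HB HeB) | apply (next_elt_idem Y B eB HB HeB)].
  - exact (next_elt_fixed_points_decidable Y B eB HB HeB).
Qed.

Theorem theorem3p1 (A B C : nat -> Prop) :
  infinite_set B -> infinite_set C ->
  (forall Y, subset_of Y B -> infinite_set Y -> ce_in Y A) ->
  (forall Y, subset_of Y C -> infinite_set Y -> ce_in Y B) ->
  forall Y, subset_of Y C -> infinite_set Y -> ce_in Y A.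
Proof.
  intros HB _ HA HBce Y HYC HY.
  destruct (infinite_ce_has_decidable_infinite_subset Y B HB (HBce Y HYC HY))
    as [Z [HZB [HZ HZY]]].
  exact (ce_in_of_decidable_in Y Z A HZY (HA Z HZB HZ)).
Qed.
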